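(* Let $A\in\mathbb{R}^{m\times n}$ with $m<n$ have unit $\ell_2$-norm columns and mutual coherence $\mu=\mu(A)$. Let $x\in\mathbb{R}^n$ and $y\in\mathbb{R}^m$ satisfy $\|y-Ax\|_2\le\epsilon$. Let $k$ be a positive integer, let $x_k$ be the best $k$-term approximation of $x$, and let $T_0$ be its support. Let $T\subset[n]=\{1,\dots,n\}$ be an arbitrary set, and define $\rho\ge 0$ and $\alpha\in[0,1]$ by $|T|=\rho k$ and $|T\cap T_0|=\alpha\rho k$. Fix a weight $w\in[0,1]$ and let $x^*$ be a minimizer of $$\min_{z\in\mathbb{R}^n}\|z\|_{1,w}\quad\text{subject to}\quad \|y-Az\|_2\le\epsilon,$$ where $\|z\|_{1,w}=\sum_{i=1}^n w_i|z_i|$ with $w_i=w$ for $i\in T$ and $w_i=1$ for $i\notin T$. Suppose that $$k<\begin{cases}\left(\dfrac{1}{2\sqrt{\rho}\,(2w\sqrt{\alpha}+1)}\left(w+\sqrt{w^2+4(2w\sqrt{\alpha}+1)\left(1+\tfrac{1}{\mu}\right)}\right)\right)^2, & \text{if } w\in(0,1],\\[2ex] \dfrac{1}{\rho}\left(1+\dfrac{1}{\mu}\right), & \text{if } w=0.\end{cases}$$ Then $$\|x^*_T-x_T\|_2\le C_0\,\epsilon+C_1\Big(w\|x-x_k\|_1+(1-w)\|x_{T^c\cap T_0^c}\|_1+\|x_{T^c\cap T_0}\|_1\Big),$$ where $$C_0=\frac{2\sqrt{1+(\rho k-1)\mu}}{1+\mu+w\mu\sqrt{\rho k}-\mu\rho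 k(2w\sqrt{\alpha}+1)},\qquad C_1=\frac{2\mu\sqrt{\rho k}}{1+\mu+w\mu\sqrt{\rho k}-\mu\rho k(2w\sqrt{\alpha}+1)}.$$
   Context: The mutual coherence of a matrix $A$ with columns $a_1,\dots,a_n$ is $\mu(A)=\max_{i\neq j}\frac{|a_i^Ta_j|}{\|a_i\|_2\|a_j\|_2}$. The best $k$-term approximation $x_k$ of $x$ keeps (at most) $k$ largest-magnitude coordinates of $x$ and sets the rest to zero. For a vector $v\in\mathbb{R}^n$ and a set $S\subseteq[n]$, $v_S$ denotes the restriction of $v$ to the coordinates in $S$ (equivalently, the vector agreeing with $v$ on $S$ and zero elsewhere); $S^c=[n]\setminus S$. *)

From HB Require Import structures.
From mathcomp Require Import all_boot all_order all_algebra.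
From mathcomp Require Import reals.
Set Implicit Arguments. Unset Strict Implicit. Unset Printing Implicit Defensive.
Import Order.TTheory GRing.Theory Num.Theory.
Local Open Scope ring_scope.

Section Defs.
Variable R : realType.

Definition norm2 (n : nat) (v : 'cV[R]_n) : R := Num.sqrt (\sum_i (v i 0) ^+ 2).

Definition norm1 (n : nat) (v : 'cV[R]_n) : R := \sum_i `|v i 0|.

Definition norm1w (n : nat) (T : {set 'I_n}) (w : R) (v : 'cV[R]_n) : R :=
  \sum_i (if i \in T then w else 1) * `|v i 0|.

Definition restrict (n : nat) (S : {set 'I_n}) (v : 'cV[R]_n) : 'cV[R]_n :=
  \col_i (if i \in S then v i 0 else 0).

Definition supp (n : nat) (v : 'cV[R]_n) : {set 'I_n} := [set i | v i 0 != 0].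

Definition coherence (m n : nat) (A : 'M[R]_(m, n)) : R :=
  \big[Num.max/0]_(i < n) \big[Num.max/0]_(j < n | i != j)
    (`|((col i A)^T *m col j A) 0 0| / (norm2 (col i A) * norm2 (col j A))).

Definition best_kterm (n k : nat) (x xk : 'cV[R]_n) : Prop :=
  exists S : {set 'I_n},
    [/\ #|S| = minn k n,
        (forall i j, i \in S -> j \notin S -> `|x j 0| <= `|x i 0|) &
        xk = restrict S x].

End Defs.

(* Put h = xstar - x.  Optimality of xstar puts h in a cone,
     w |h_T|_1 + |h_T^c|_1 <= 2 w |h_(T /\ T0)|_1 + 2 (w |x_(T \ T0)|_1 + |x_T^c|_1),
   and feasibility of both x and xstar gives <A h_T, A h> <= 2 eps |A h_T|_2.
   Unit columns with coherence mu make <A u, A v> differ from <u, v> by at most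
   mu (|u|_1 |v|_1 - sum_i |u_i| |v_i|); this bounds <A h_T, A h> from below and
   |A h_T|_2 from above.  Together with |h_T|_1 <= sqrt |T| |h_T|_2 and
   |h_(T /\ T0)|_1 <= sqrt (alpha |T|) |h_T|_2 this yields
   D |h_T|_2 <= 2 sqrt (1 + (rho k - 1) mu) eps + 2 mu sqrt (rho k) (tail terms),
   and the bound on k guarantees D > 0. *)

From HB Require Import structures.
From mathcomp Require Import all_boot all_order all_algebra.
From mathcomp Require Import reals.
From mathcomp Require Import ring lra.
Import Order.TTheory GRing.Theory Num.Theory.
Local Open Scope ring_scope.

Section SparseRecovery.
Set Implicit Arguments.
Unset Strict Implicit.
Variable R : realType.

Lemma sum_mul_sqr_le (I : finType) (u v : I -> R) :
  (\sum_i u i * v i) ^+ 2 <= (\sum_i u i ^+ 2) * (\sum_i v i ^+ 2).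
Proof.
have lagrange : \sum_i \sum_j (u i * v j - u j * v i) ^+ 2 =
    (\sum_i u i ^+ 2) * (\sum_j v j ^+ 2) + (\sum_i v i ^+ 2) * (\sum_j u j ^+ 2)
    - 2 * ((\sum_i u i * v i) * (\sum_j u j * v j)).
  rewrite !big_distrlr /= mulr_sumr -!big_split /= -sumrB; apply: eq_bigr => i _.
  by rewrite mulr_sumr -!big_split /= -sumrB; apply: eq_bigr => j _; ring.
have : 0 <= \sum_i \sum_j (u i * v j - u j * v i) ^+ 2.
  by apply: sumr_ge0 => i _; apply: sumr_ge0 => j _; exact: sqr_ge0.
rewrite lagrange; lra.
Qed.

Definition dotv n (u v : 'cV[R]_n) : R := \sum_i u i 0 * v i 0.

Lemma norm2_ge0 n (v : 'cV[R]_n) : 0 <= norm2 v.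
Proof. exact: sqrtr_ge0. Qed.

Lemma norm1_ge0 n (v : 'cV[R]_n) : 0 <= norm1 v.
Proof. by apply: sumr_ge0 => i _. Qed.

Lemma sqr_norm2 n (v : 'cV[R]_n) : norm2 v ^+ 2 = \sum_i v i 0 ^+ 2.
Proof. by rewrite sqr_sqrtr // sumr_ge0 // => i _; exact: sqr_ge0. Qed.

Lemma dotvv n (v : 'cV[R]_n) : dotv v v = norm2 v ^+ 2.
Proof. by rewrite sqr_norm2; apply: eq_bigr => i _; rewrite expr2. Qed.

Lemma dotvBr n (u v w : 'cV[R]_n) : dotv u (v - w) = dotv u v - dotv u w.
Proof. by rewrite /dotv -sumrB; apply: eq_bigr => i _; rewrite !mxE mulrBr. Qed.

Lemma dotv_le_norm2 n (u v : 'cV[R]_n) : `|dotv u v| <= norm2 u * norm2 v.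
Proof.
rewrite -(ler_pXn2r (n := 2)) ?nnegrE ?mulr_ge0 ?norm2_ge0 //.
by rewrite exprMn !sqr_norm2 real_normK ?num_real //; exact: sum_mul_sqr_le.
Qed.

Lemma norm2_abs n (v : 'cV[R]_n) : norm2 (\col_i `|v i 0|) = norm2 v.
Proof.
by congr Num.sqrt; apply: eq_bigr => i _; rewrite mxE real_normK ?num_real.
Qed.

Lemma norm1_restrict_le n (S : {set 'I_n}) (v : 'cV[R]_n) :
  norm1 (restrict S v) <= Num.sqrt #|S|%:R * norm2 (restrict S v).
Proof.
pose ind : 'cV[R]_n := \col_i (if i \in S then 1 else 0).
have -> : norm1 (restrict S v) = dotv ind (\col_i `|restrict S v i 0|).
  by apply: eq_bigr => i _; rewrite !mxE; case: ifP; rewrite ?mul1r ?mul0r ?normr0.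
have -> : Num.sqrt #|S|%:R = norm2 ind.
  congr Num.sqrt; rewrite (eq_bigr (fun i => if i \in S then 1 else 0)).
    by rewrite -big_mkcond sumr_const.
  by move=> i _; rewrite mxE; case: ifP; rewrite ?expr1n ?expr0n.
by rewrite -[X in _ <= _ * X]norm2_abs; exact: le_trans (ler_norm _) (dotv_le_norm2 _ _).
Qed.

Lemma norm2_restrict_subset n (S S' : {set 'I_n}) (v : 'cV[R]_n) :
  S \subset S' -> norm2 (restrict S v) <= norm2 (restrict S' v).
Proof.
move=> /subsetP sSS'; rewrite ler_sqrt ?sumr_ge0 // => [|i _]; last exact: sqr_ge0.
apply: ler_sum => i _; rewrite !mxE; case: ifP => [/sSS' -> //|_].
by rewrite expr0n sqr_ge0.
Qed.

Lemma restrictB n (S : {set 'I_n}) (u v : 'cV[R]_n) :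
  restrict S u - restrict S v = restrict S (u - v).
Proof. by apply/colP => i; rewrite !mxE; case: ifP; rewrite ?subr0. Qed.

Lemma norm1_restrictC n (S : {set 'I_n}) (v : 'cV[R]_n) :
  norm1 v = norm1 (restrict S v) + norm1 (restrict (~: S) v).
Proof.
rewrite /norm1 -big_split; apply: eq_bigr => i _ /=.
by rewrite !mxE inE; case: (i \in S); rewrite /= normr0 ?addr0 ?add0r.
Qed.

Lemma coherence_ge0 m n (A : 'M[R]_(m, n)) : 0 <= coherence A.
Proof. exact: bigmax_ge_id. Qed.

Lemma dotv_col_le_coherence m n (A : 'M[R]_(m, n)) (i j : 'I_n) :
  (forall j, norm2 (col j A) = 1) -> i != j ->
  `|dotv (col i A) (col j A)| <= coherence A.
Proof.
move=> unitA neq_ij; rewrite /coherence; apply: le_trans (le_bigmax _ _ i).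
have -> : dotv (col i A) (col j A) = ((col i A)^T *m col j A) 0 0.
  by rewrite mxE; apply: eq_bigr => r _; rewrite !mxE.
rewrite -[X in X <= _]divr1 -[X in _ / X]mulr1 -{1}(unitA i) -(unitA j).
exact: le_bigmax_cond.
Qed.

Lemma dotv_mulmx m n (A : 'M[R]_(m, n)) (u v : 'cV[R]_n) :
  dotv (A *m u) (A *m v) = \sum_i \sum_j u i 0 * v j 0 * dotv (col i A) (col j A).
Proof.
rewrite /dotv; under eq_bigr do rewrite !mxE big_distrlr /=.
rewrite exchange_big /=; apply: eq_bigr => i _.
rewrite exchange_big /=; apply: eq_bigr => j _.
by rewrite mulr_sumr; apply: eq_bigr => r _; rewrite !mxE; ring.
Qed.

Lemma dotv_mulmx_coherence m n (A : 'M[R]_(m, n)) (u v : 'cV[R]_n) :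
  (forall j, norm2 (col j A) = 1) ->
  `|dotv (A *m u) (A *m v) - dotv u v| <=
    coherence A * (norm1 u * norm1 v - \sum_i `|u i 0| * `|v i 0|).
Proof.
move=> unitA; rewrite dotv_mulmx /norm1 mulr_suml -!sumrB mulr_sumr.
apply: le_trans (ler_norm_sum _ _ _) _; apply: ler_sum => i _.
rewrite (bigD1 i) //= dotvv unitA expr1n mulr1 addrAC subrr add0r.
rewrite [\sum_j `|v j 0|](bigD1 i) //= [`|u i 0| * (_ + _)]mulrDr.
rewrite addrAC subrr add0r !mulr_sumr.
apply: le_trans (ler_norm_sum _ _ _) _; apply: ler_sum => j neq_ji.
rewrite !normrM mulrC ler_wpM2r ?mulr_ge0 //.
by apply: dotv_col_le_coherence; rewrite // eq_sym.
Qed.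

Lemma dotv_residual_le m n (A : 'M[R]_(m, n)) (y : 'cV[R]_m) (x z : 'cV[R]_n)
    (u : 'cV[R]_m) (eps : R) :
  norm2 (y - A *m x) <= eps -> norm2 (y - A *m z) <= eps ->
  dotv u (A *m (z - x)) <= 2 * eps * norm2 u.
Proof.
move=> resx resz.
have -> : A *m (z - x) = (y - A *m x) - (y - A *m z).
  by apply/matrixP => i j; rewrite mulmxBr !mxE; ring.
rewrite dotvBr.
have := dotv_le_norm2 u (y - A *m x); have := dotv_le_norm2 u (y - A *m z).
have := ler_wpM2l (norm2_ge0 u) resx; have := ler_wpM2l (norm2_ge0 u) resz.
rewrite !ler_norml; lra.
Qed.

Lemma restricted_error_bound m n (A : 'M[R]_(m, n)) (y : 'cV[R]_m) (x z : 'cV[R]_n)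
    (eps : R) (T : {set 'I_n}) :
  (forall j, norm2 (col j A) = 1) ->
  norm2 (y - A *m x) <= eps -> norm2 (y - A *m z) <= eps ->
  (1 + coherence A) * norm2 (restrict T (z - x)) ^+ 2
    - coherence A * norm1 (restrict T (z - x)) * norm1 (z - x) <=
  2 * eps * Num.sqrt (1 + (#|T|%:R - 1) * coherence A) * norm2 (restrict T (z - x)).
Proof.
move=> unitA resx resz; set mu := coherence A; set hT := restrict T (z - x).
have mu_ge0 : 0 <= mu := coherence_ge0 A.
have eps_ge0 : 0 <= eps := le_trans (norm2_ge0 _) resx.
have hT_on_h (f : R -> R) : f 0 = 0 ->
    \sum_i f (hT i 0) * f ((z - x) i 0) = \sum_i f (hT i 0) * f (hT i 0).
  move=> f0; apply: eq_bigr => i _; rewrite /hT mxE.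
  by case: ifP => _; rewrite ?f0 ?mul0r.
have abs_hT : \sum_i `|hT i 0| * `|hT i 0| = norm2 hT ^+ 2.
  by rewrite sqr_norm2; apply: eq_bigr => i _; rewrite -normrM -expr2 ger0_norm ?sqr_ge0.
have low := dotv_mulmx_coherence hT (z - x) unitA.
rewrite /dotv (hT_on_h id) // (hT_on_h (@Num.norm _ _)) ?normr0 // abs_hT in low.
rewrite -/(dotv hT hT) -/(dotv (A *m hT) _) dotvv -/mu in low.
have up := dotv_mulmx_coherence hT hT unitA.
rewrite !dotvv abs_hT -/mu in up.
have b_le := norm1_restrict_le T (z - x); rewrite -/hT in b_le.
have b2_le : norm1 hT ^+ 2 <= #|T|%:R * norm2 hT ^+ 2.
  rewrite -[#|T|%:R]sqr_sqrtr // -exprMn.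
  by rewrite ler_pXn2r ?nnegrE ?mulr_ge0 ?norm1_ge0 ?norm2_ge0 ?sqrtr_ge0.
have AhT_le : norm2 (A *m hT) <= Num.sqrt (1 + (#|T|%:R - 1) * mu) * norm2 hT.
  rewrite -[norm2 (A *m hT)]ger0_norm ?norm2_ge0 // -sqrtr_sqr.
  rewrite -[norm2 hT]ger0_norm ?norm2_ge0 // -sqrtr_sqr mulrC -sqrtrM ?sqr_ge0 //.
  apply: ler_wsqrtr; move: up; rewrite ler_norml => /andP[_].
  have := ler_wpM2l mu_ge0 b2_le; lra.
have tube := dotv_residual_le (A *m hT) resx resz.
have := ler_wpM2l (mulr_ge0 (ler0n _ 2) eps_ge0) AhT_le.
move: low; rewrite ler_norml => /andP[low _]; lra.
Qed.

Lemma weighted_l1_cone n (T T0 : {set 'I_n}) (w : R) (x z : 'cV[R]_n) :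
  0 <= w -> norm1w T w z <= norm1w T w x ->
  w * norm1 (restrict T (z - x)) + norm1 (restrict (~: T) (z - x)) <=
  2 * w * norm1 (restrict (T :&: T0) (z - x)) +
  2 * (w * norm1 (restrict (T :\: T0) x) + norm1 (restrict (~: T) x)).
Proof.
move=> w_ge0 zx; rewrite -subr_le0 in zx; rewrite -subr_le0.
apply: le_trans zx; rewrite /norm1 /norm1w !mulr_sumr -!big_split /=.
rewrite mulr_sumr -big_split -!sumrB /=.
apply: ler_sum => i _; rewrite !mxE !inE.
have tri_x : `|x i 0| <= `|z i 0 - x i 0| + `|z i 0|.
  by rewrite distrC; apply: le_trans (ler_normD _ _); rewrite subrK.
have tri_h := ler_normB (z i 0) (x i 0).
have := ler_wpM2l w_ge0 tri_x; have := ler_wpM2l w_ge0 tri_h.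
by case: (i \in T); case: (i \in T0); rewrite /= ?normr0; lra.
Qed.

Lemma restrict_supp_subr n (S : {set 'I_n}) (x : 'cV[R]_n) :
  x - restrict S x = restrict (~: supp (restrict S x)) x.
Proof.
apply/colP => i; rewrite !mxE !inE mxE.
case: (i \in S); rewrite /= ?eqxx ?subr0 // subrr.
by case: eqVneq.
Qed.

Lemma weighted_tail_norm1E n (T T0 : {set 'I_n}) (w : R) (x : 'cV[R]_n) :
  w * norm1 (restrict (~: T0) x) + (1 - w) * norm1 (restrict (~: T :&: ~: T0) x)
    + norm1 (restrict (~: T :&: T0) x)
  = w * norm1 (restrict (T :\: T0) x) + norm1 (restrict (~: T) x).
Proof.
rewrite /norm1 !mulr_sumr -!big_split; apply: eq_bigr => i _; rewrite !mxE !inE.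
by case: (i \in T); case: (i \in T0); rewrite /= ?normr0; ring.
Qed.

Lemma lt_of_lt_quadratic_root (c K w s : R) :
  0 < c -> 0 < K -> 0 <= s ->
  2 * c * s < w + Num.sqrt (w ^+ 2 + 4 * c * K) -> c * s ^+ 2 - w * s < K.
Proof.
move=> c_gt0 K_gt0 s_ge0; set Q := Num.sqrt _ => lt_root.
have Q_ge0 : 0 <= Q := sqrtr_ge0 _.
have [le_ws|lt_sw] := lerP 0 (2 * c * s - w).
  have : (2 * c * s - w) ^+ 2 < Q ^+ 2 by rewrite ltr_pXn2r ?nnegrE //; lra.
  rewrite sqr_sqrtr; last by rewrite addr_ge0 ?sqr_ge0 // mulr_ge0 ?mulr_ge0 //; lra.
  move=> lt_sqr; have : 0 < 4 * c * (K - (c * s ^+ 2 - w * s)) by lra.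
  by rewrite pmulr_rgt0 ?subr_gt0 //; lra.
have : 0 <= s * (w - c * s) by rewrite mulr_ge0 //; nra.
lra.
Qed.

Lemma coherence_denominator_gt0 (mu w sa t : R) :
  0 <= mu -> 0 <= w -> 0 <= sa -> 0 <= t ->
  (0 < w -> t * (2 * (2 * w * sa + 1)) ^+ 2 <
     (w + Num.sqrt (w ^+ 2 + 4 * (2 * w * sa + 1) * (1 + 1 / mu))) ^+ 2) ->
  (w = 0 -> t < 1 + 1 / mu) ->
  0 < 1 + mu + w * mu * Num.sqrt t - mu * t * (2 * w * sa + 1).
Proof.
move=> mu_ge0 w_ge0 sa_ge0 t_ge0; set c := 2 * w * sa + 1; set K := 1 + 1 / mu.
move=> k_pos k_zero.
have [->|mu_neq0] := eqVneq mu 0; first by rewrite !mulr0 !mul0r subr0 !addr0 ltr01.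
have mu_gt0 : 0 < mu by rewrite lt0r mu_neq0.
have K_gt0 : 0 < K by rewrite ltr_wpDr ?divr_ge0.
have c_ge1 : 1 <= c by rewrite lerDr !mulr_ge0.
have muK : mu * K = 1 + mu by rewrite mulrDr mulr1 mul1r mulfV // addrC.
have -> : 1 + mu + w * mu * Num.sqrt t - mu * t * c =
          mu * (K - (c * t - w * Num.sqrt t)) by rewrite mulrBr muK; ring.
rewrite pmulr_rgt0 // subr_gt0 -[t in c * t]sqr_sqrtr //.
have [w0|w_neq0] := eqVneq w 0.
  by rewrite sqr_sqrtr // /c w0; have := k_zero w0; lra.
have w_gt0 : 0 < w by rewrite lt0r w_neq0.
(* The bound on k says that sqrt t lies below the positive root of c s^2 - w s - K. *)
apply: lt_of_lt_quadratic_root; rewrite ?sqrtr_ge0 //; first lra.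
have := k_pos w_gt0; rewrite -{1}[t]sqr_sqrtr // -exprMn mulrC.
rewrite ltr_pXn2r // ?nnegrE; last by rewrite addr_ge0 ?sqrtr_ge0 //; lra.
by rewrite !mulr_ge0 ?sqrtr_ge0 //; lra.
Qed.

Lemma sqrtr_nat_le (q : nat) : Num.sqrt (q%:R : R) <= q%:R.
Proof.
have s_ge0 : 0 <= Num.sqrt (q%:R : R) := sqrtr_ge0 _.
have ss : Num.sqrt (q%:R : R) * Num.sqrt q%:R = q%:R by rewrite -expr2 sqr_sqrtr.
case: q ss s_ge0 => [|q] ss s_ge0; first by rewrite sqrtr0.
have : 1 <= Num.sqrt (q.+1%:R : R) by rewrite -{1}sqrtr1 ler_sqrt // ler1n.
nra.
Qed.

Lemma weighted_error_arith (q : nat) (mu w sa eps E Z a b b0 Lp : R) :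
  0 <= mu -> 0 <= w <= 1 -> 0 <= sa -> 0 <= eps -> 0 <= E -> 0 <= Z -> 0 <= a ->
  0 <= b -> 0 <= b0 -> b <= Num.sqrt q%:R * a -> b0 <= sa * Num.sqrt q%:R * a ->
  w * b + Lp <= 2 * w * b0 + 2 * E ->
  (1 + mu) * a ^+ 2 - mu * b * (b + Lp) <= 2 * eps * Z * a ->
  a * (1 + mu + w * mu * Num.sqrt q%:R - mu * q%:R * (2 * w * sa + 1))
    <= 2 * Z * eps + 2 * mu * Num.sqrt q%:R * E.
Proof.
move=> mu_ge0 /andP[w_ge0 w_le1] sa_ge0 eps_ge0 E_ge0 Z_ge0 a_ge0 b_ge0 b0_ge0.
set s := Num.sqrt q%:R => b_le b0_le cone main.
have s_ge0 : 0 <= s := sqrtr_ge0 _.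
have ss : s * s = q%:R by rewrite -expr2 sqr_sqrtr.
have [->|a_neq0] := eqVneq a 0.
  by rewrite mul0r addr_ge0 // !mulr_ge0.
have a_gt0 : 0 < a by rewrite lt0r a_neq0.
have bLp : b * (b + Lp) <=
    (1 - w) * q%:R * a ^+ 2 + 2 * w * sa * q%:R * a ^+ 2 + 2 * s * a * E.
  have S1 : b * (b + Lp) <= b * (b + (2 * w * b0 - w * b + 2 * E)).
    by apply: ler_wpM2l => //; lra.
  have S2 : (1 - w) * (b * b) <= (1 - w) * ((s * a) * (s * a)).
    by apply: ler_wpM2l; [lra | apply: ler_pM].
  have S3 : w * (b * b0) <= w * ((s * a) * (sa * s * a)).
    by apply: ler_wpM2l => //; apply: ler_pM.
  have S4 : b * E <= (s * a) * E by apply: ler_wpM2r.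
  have E2 : (s * a) * (s * a) = q%:R * a ^+ 2 by rewrite -ss; ring.
  have E3 : (s * a) * (sa * s * a) = sa * q%:R * a ^+ 2 by rewrite -ss; ring.
  rewrite E2 in S2; rewrite E3 in S3; lra.
have : a * (a * (1 + mu - mu * q%:R * (1 - w + 2 * w * sa))
             - (2 * Z * eps + 2 * mu * s * E)) <= 0.
  by have := ler_wpM2l mu_ge0 bLp; lra.
rewrite pmulr_rle0 // subr_le0 => le_a.
(* The denominator carries w mu sqrt q where w mu q would do. *)
have : w * mu * s <= w * mu * q%:R by rewrite ler_wpM2l ?mulr_ge0 ?sqrtr_nat_le.
move/(ler_wpM2l a_ge0); lra.
Qed.

End SparseRecovery.

Theorem theorem6 (R : realType) (m n : nat) (A : 'M[R]_(m, n))
    (x : 'cV[R]_n) (y : 'cV[R]_m) (eps : R) (k : nat) (xk : 'cV[R]_n)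
    (T : {set 'I_n}) (rho alpha w : R) (xstar : 'cV[R]_n) :
  (m < n)%N ->
  (forall j, norm2 (col j A) = 1) ->
  norm2 (y - A *m x) <= eps ->
  (0 < k)%N ->
  best_kterm k x xk ->
  let T0 := supp xk in
  let mu := coherence A in
  0 <= rho -> 0 <= alpha <= 1 ->
  #|T|%:R = rho * k%:R ->
  #|T :&: T0|%:R = alpha * rho * k%:R ->
  0 <= w <= 1 ->
  (* xstar minimizes the weighted l1 norm subject to ||y - A z||_2 <= eps *)
  norm2 (y - A *m xstar) <= eps ->
  (forall z : 'cV[R]_n, norm2 (y - A *m z) <= eps ->
     norm1w T w xstar <= norm1w T w z) ->
  (* the bound on k, with denominators cleared (rho = 0 means the bound is +oo) *)
  (0 < w ->
     k%:R * rho * (2 * (2 * w * Num.sqrt alpha + 1)) ^+ 2 <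
     (w + Num.sqrt (w ^+ 2 + 4 * (2 * w * Num.sqrt alpha + 1) * (1 + 1 / mu))) ^+ 2) ->
  (w = 0 -> k%:R * rho < 1 + 1 / mu) ->
  let D := 1 + mu + w * mu * Num.sqrt (rho * k%:R)
           - mu * rho * k%:R * (2 * w * Num.sqrt alpha + 1) in
  let C0 := 2 * Num.sqrt (1 + (rho * k%:R - 1) * mu) / D in
  let C1 := 2 * mu * Num.sqrt (rho * k%:R) / D in
  norm2 (restrict T xstar - restrict T x) <=
    C0 * eps + C1 * (w * norm1 (x - xk)
                     + (1 - w) * norm1 (restrict (~: T :&: ~: T0) x)
                     + norm1 (restrict (~: T :&: T0) x)).
Proof.
move=> _ unitA resx _ [S [_ _ ->]] T0 mu _ /andP[alpha_ge0 _] cardT cardTT0 w01 resxs opt.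
rewrite [k%:R * rho]mulrC -(mulrA mu rho) -cardT => k_pos k_zero; cbv zeta.
rewrite -mulrA -cardT in cardTT0.
have /andP[w_ge0 _] := w01.
have := coherence_denominator_gt0 (coherence_ge0 A) w_ge0
  (sqrtr_ge0 alpha) (ler0n _ _) k_pos k_zero.
rewrite -/mu; set D := (1 + mu + _ - _) => D_gt0.
rewrite restrictB restrict_supp_subr -/T0 weighted_tail_norm1E.
rewrite mulrAC [_ / D * _]mulrAC -mulrDl ler_pdivlMr // /D.
set h := xstar - x.
have eps_ge0 : 0 <= eps := le_trans (norm2_ge0 _) resx.
have tail_ge0 : 0 <= w * norm1 (restrict (T :\: T0) x) + norm1 (restrict (~: T) x).
  by rewrite addr_ge0 ?mulr_ge0 ?norm1_ge0.
have b0_le : norm1 (restrict (T :&: T0) h) <=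
    Num.sqrt alpha * Num.sqrt #|T|%:R * norm2 (restrict T h).
  rewrite -sqrtrM // -cardTT0; apply: le_trans (norm1_restrict_le _ _) _.
  by rewrite ler_wpM2l ?sqrtr_ge0 ?norm2_restrict_subset ?subsetIl.
have cone := weighted_l1_cone T0 w_ge0 (opt x resx).
have main := restricted_error_bound T unitA resx resxs.
rewrite [norm1 (xstar - x)](norm1_restrictC T) in main.
exact: weighted_error_arith (coherence_ge0 A) w01 (sqrtr_ge0 _) eps_ge0 tail_ge0
  (sqrtr_ge0 _) (norm2_ge0 _) (norm1_ge0 _) (norm1_ge0 _) (norm1_restrict_le T h)
  b0_le cone main.
Qed.
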